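(* Fix $\mathbf{x} \in \Omega$, $\alpha \in [0,1)$ and $i \in \{1,\dots,n\}$, and let $C = \{x_{(i)}\}$. Then $$B_{R_i}^*(\mathbf{x}) = \min\{E[F] : F \in \mathcal{F}_{C^+}(\Omega(\mathbf{x},R_i),\alpha)\}.$$
   Context: Fix integers $m \ge 2$, $n \ge 1$ and reals $S_{\min} < S_{\max}$; $S = \{S_0,\dots,S_{m-1}\}$ with $S_k = S_{\min} + k\frac{S_{\max}-S_{\min}}{m-1}$. $\mathcal{F}$ is the set of probability distributions on $S$, identified with the probability simplex in $\mathbb{R}^m$ with the Euclidean topology; $E[F]$ is the mean. $\Omega$ is the set of samples of size $n$ from $S$, identified with their sorted versions $x_{(1)} \le \dots \le x_{(n)}$. $P_F[\Omega']$ is the probability that the sorted sample of $n$ i.i.d. draws from $F$ lies in $\Omega' \subseteq \Omega$; $\mathcal{G}(\Omega',\alpha) = \{F : P_F[\Omega'] > \alpha\}$ and $\mathcal{F}(\Omega',\alpha)$ is its closure. The $i$th quantile preorder $R_i$ on $\Omega$: $\mathbf{x} \lesssim_{R_i} \mathbf{y}$ iff $x_{(i)} \le y_{(i)}$; $\Omega(\mathbf{x},R_i) = \{\mathbf{y} : x_{(i)} \le y_{(i)}\}$; $B_{R_i}^*(\mathbf{x}) = \min\{E[F] : F \in \mathcal{F}(\Omega(\mathbf{x},R_i),\alpha)\}$. For $C \subseteq S$: $\mathcal{F}_C = \{F \in \mathcal{F} : P_F[X = s] = 0 \ \forall s \in S\setminus C\}$, $\mathcal{G}_C(\Omega',\alpha)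 = \mathcal{F}_C \cap \mathcal{G}(\Omega',\alpha)$, $\mathcal{F}_C(\Omega',\alpha)$ is the closure of $\mathcal{G}_C(\Omega',\alpha)$, and $C^+ = C \cup \{S_{\min}\} \cup \{S_{j+1} : S_j \in C,\ j \le m-2\}$. *)

From HB Require Import structures.
From mathcomp Require Import all_boot all_order all_algebra.
From mathcomp Require Import all_classical all_reals topology normedtype matrix_topology.
Set Implicit Arguments. Unset Strict Implicit. Unset Printing Implicit Defensive.
Import Order.TTheory GRing.Theory Num.Theory.
Local Open Scope ring_scope.
Import numFieldNormedType.Exports.
Local Open Scope classical_set_scope.

Section Defs.
Variables (R : realType) (m n : nat) (Smin Smax : R).

Definition Spt (k : 'I_m) : R :=
  Smin + k%:R * ((Smax - Smin) / (m.-1)%:R).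

(* probability distributions on S, as the simplex in R^m (row vectors) *)
Definition simplex : set 'rV[R]_m :=
  [set F | (forall k, 0 <= F 0 k) /\ \sum_(k < m) F 0 k = 1].

Definition mean (F : 'rV[R]_m) : R := \sum_(k < m) F 0 k * Spt k.

(* sorted version of a sample (given by indices of the drawn support points;
   the order on indices coincides with the order on the values S_k) *)
Definition sortS (t : seq 'I_m) : seq 'I_m :=
  sort (fun a b : 'I_m => (a <= b)%N) t.

(* P_F[Om] : probability that the sorted sample of n i.i.d. draws from F
   lies in Om (Om is a predicate on sorted samples) *)
Definition Prob (F : 'rV[R]_m) (Om : seq 'I_m -> bool) : R :=
  \sum_(t : n.-tuple 'I_m | Om (sortS t)) \prod_(j < n) F 0 (tnth t j).

Definition Gset (Om : seq 'I_m -> bool) (alpha : R) : set 'rV[R]_m :=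
  [set F | simplex F /\ alpha < Prob F Om].
Definition Fset (Om : seq 'I_m -> bool) (alpha : R) : set 'rV[R]_m :=
  closure (Gset Om alpha).

Definition FC (C : {set 'I_m}) : set 'rV[R]_m :=
  [set F | simplex F /\ forall k, k \notin C -> F 0 k = 0].
Definition GCset (C : {set 'I_m}) (Om : seq 'I_m -> bool) (alpha : R) :=
  FC C `&` Gset Om alpha.
Definition FCset (C : {set 'I_m}) (Om : seq 'I_m -> bool) (alpha : R) :=
  closure (GCset C Om alpha).

(* i-th order statement (i : 'I_n, 0-based) of a sorted sample *)
Definition ostat (y : seq 'I_m) (i : nat) : R :=
  match y with [::] => 0 | a :: _ => Spt (nth a y i) end.

Definition Omega_q (x : seq 'I_m) (i : nat) : seq 'I_m -> bool :=
  fun y => ostat x i <= ostat y i.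

End Defs.

Definition Cplus (m : nat) (C : {set 'I_m}) : {set 'I_m} :=
  [set k : 'I_m | (k \in C) || (val k == 0%N) ||
                  [exists j in C, val k == (val j).+1]].

Definition is_min_mean (R : realType) (m : nat) (Smin Smax : R)
  (A : set 'rV[R]_m) (v : R) : Prop :=
  (exists F, A F /\ mean Smin Smax F = v) /\
  (forall F, A F -> v <= mean Smin Smax F).

From HB Require Import structures.
From mathcomp Require Import all_boot all_order all_algebra.
From mathcomp Require Import all_classical all_reals topology normedtype matrix_topology.
From mathcomp Require Import function_spaces lra.
Set Implicit Arguments. Unset Strict Implicit. Unset Printing Implicit Defensive.
Import numFieldNormedType.Exports.
Import Order.TTheory GRing.Theory Num.Theory.
Local Open Scope ring_scope.

(* A sorted sample lies in Omega(x, R_i) iff at most i of its points fall strictly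
   below c = x_(i), so P_F[Omega(x, R_i)] = P(Bin(n, p) <= i) only depends on the
   mass p that F puts below c.  Moving that mass to S_min and the rest onto c gives
   a distribution of F_{C^+} with the same probability and a smaller mean.  Hence,
   if q is the supremum of p over G(Omega(x, R_i), alpha), the mean on G is bounded
   below by that of the two-point law T q with mass q at S_min and 1 - q at c; the
   bound extends to the closure by continuity of the mean, and T q is a limit of
   two-point laws lying in G_{C^+}. *)

Lemma sorted_leq_nth_count (m : nat) (c d : 'I_m) (y : seq 'I_m) (j : nat) :
  sorted (fun a b : 'I_m => (a <= b)%N) y -> (j < size y)%N ->
  (c <= nth d y j)%N = (count (fun k : 'I_m => (k < c)%N) y <= j)%N.
Proof.
have leq_tr : transitive (fun a b : 'I_m => (a <= b)%N).
  by move=> a b e; apply: leq_trans.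
elim: y j => [|a y IH] j //= y_sorted j_lt.
have /allP a_min := order_path_min leq_tr y_sorted.
have count0 : (c <= a)%N -> count (fun k : 'I_m => (k < c)%N) y = 0%N.
  move=> le_ca; apply/eqP; rewrite -leqn0 leqNgt -has_count; apply/hasPn => k yk.
  by rewrite -leqNgt (leq_trans le_ca) // a_min.
case: j j_lt => [|j] j_lt /=; case: (ltnP a c) => [lt_ac | le_ca] //=.
- by rewrite count0.
- by rewrite add1n ltnS IH // (path_sorted y_sorted).
- by rewrite add0n count0 // (leq_trans le_ca) // a_min // mem_nth.
Qed.

Lemma sum_tuple_count (R : comPzSemiRingType) (T : finType) (n : nat)
    (w : T -> R) (b : pred T) (P : pred nat) :
  \sum_(t : n.-tuple T | P (count b t)) \prod_(j < n) w (tnth t j) =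
  \sum_(g : {ffun 'I_n -> bool} | P (count g (enum 'I_n)))
     \prod_(j < n) (if g j then \sum_(k | b k) w k else \sum_(k | ~~ b k) w k).
Proof.
(* Group the tuples by the set of draws falling in [b]; each group factorises. *)
have countE (f : {ffun 'I_n -> T}) :
    count b [tuple f j | j < n] = count [ffun j => b (f j)] (enum 'I_n).
  by rewrite /= count_map; apply: eq_count => j; rewrite /= ffunE.
rewrite (reindex (fun f : {ffun 'I_n -> T} => [tuple f j | j < n])) /=; last first.
  exists (fun t => [ffun j => tnth t j]) => f _.
    by apply/ffunP => j; rewrite ffunE tnth_mktuple.
  by apply: eq_from_tnth => j; rewrite tnth_mktuple ffunE.
rewrite (partition_big (fun f : {ffun 'I_n -> T} => [ffun j => b (f j)])
   (fun g => P (count g (enum 'I_n)))) /=; last by move=> f; rewrite countE.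
apply: eq_bigr => g Pg.
transitivity (\prod_(j < n) \sum_(k | b k == g j) w k); last first.
  by apply: eq_bigr => j _; case: (g j); apply: eq_bigl => k;
    [rewrite eqb_id | rewrite eqbF_neg].
rewrite bigA_distr_big_dep; apply: eq_big => [f|f _]; last first.
  by apply: eq_bigr => j _; rewrite tnth_mktuple.
rewrite countE; apply/andP/familyP => [[_ /eqP <-] j | bf_g].
  by rewrite ffunE unfold_in.
have -> : [ffun j => b (f j)] = g.
  by apply/ffunP => j; rewrite ffunE; move: (bf_g j); rewrite unfold_in => /eqP.
by rewrite Pg eqxx.
Qed.

Lemma sum_delta_mul (R : pzSemiRingType) (I : finType) (P : pred I) (a : I)
    (g : I -> R) :
  \sum_(k | P k) (k == a)%:R * g k = (P a)%:R * g a.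
Proof.
case Pa: (P a); last first.
  rewrite mul0r big1 // => k Pk.
  by case: eqP => [ka|]; rewrite ?mul0r //; rewrite ka Pa in Pk.
rewrite mul1r (bigD1 a) //= eqxx mul1r big1 ?addr0 // => k /andP [_ /negbTE ->].
by rewrite mul0r.
Qed.

Definition binomial_cdf {R : pzRingType} (n i : nat) (p : R) : R :=
  \sum_(g : {ffun 'I_n -> bool} | (count g (enum 'I_n) <= i)%N)
     \prod_(j < n) (if g j then p else 1 - p).

Lemma binomial_cdf0 (R : comPzRingType) (n i : nat) : binomial_cdf n i (0 : R) = 1.
Proof.
rewrite /binomial_cdf (bigD1 [ffun => false]) /=; last first.
  by rewrite (eq_count (a2 := pred0)) ?count_pred0 // => j; rewrite ffunE.
rewrite big1 ?mul1r => [|j _]; last by rewrite ffunE subr0.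
rewrite big1 ?addr0 // => g /andP [_ g_neq0].
have [j gj] : exists j, g j.
  apply/existsP; apply: contraNT g_neq0; rewrite negb_exists => /forallP gF.
  by apply/eqP/ffunP => j; rewrite ffunE; apply/negbTE/gF.
by rewrite (bigD1 j) //= gj mul0r.
Qed.

Section ClosureLemmas.
Local Open Scope classical_set_scope.

Lemma image_closure_continuous (T U : topologicalType) (f : T -> U) (A : set T) :
  continuous f -> f @` closure A `<=` closure (f @` A).
Proof.
move=> f_cont _ [x clAx <-] B /f_cont /clAx [a [Aa Bfa]].
by exists (f a); split => //; exists a.
Qed.

Lemma closure_ge_continuous (T : topologicalType) (R : realType) (f : T -> R)
    (A : set T) (v : R) :
  continuous f -> (forall x, A x -> v <= f x) ->
  forall x, closure A x -> v <= f x.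
Proof.
move=> f_cont A_ge; suff : closure A `<=` f @^-1` [set y | v <= y] by apply.
have /closure_id -> : closed (f @^-1` [set y | v <= y]).
  by apply: preimage_closed => [y _|]; [exact: f_cont | exact: closed_ge].
exact: closureS.
Qed.

End ClosureLemmas.

Section SupportPoints.
Variables (R : realType) (m : nat) (Smin Smax : R).
Hypotheses (hm : (2 <= m)%N) (hS : Smin < Smax).

Local Notation Spt := (Spt Smin Smax).
Local Notation mean := (mean Smin Smax).

Definition idx_min : 'I_m := Ordinal (leq_trans (isT : (0 < 2)%N) hm).

Lemma Spt_min : Spt idx_min = Smin.
Proof. by rewrite /Spt mul0r addr0. Qed.

Lemma ler_Spt (a b : 'I_m) : (Spt a <= Spt b) = (a <= b)%N.
Proof.
rewrite /Spt lerD2l ler_pM2r ?ler_nat // divr_gt0 ?subr_gt0 // ltr0n.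
by case: m hm a b => [|[|m']].
Qed.

Lemma Smin_le_Spt (a : 'I_m) : Smin <= Spt a.
Proof. by rewrite -[leLHS]Spt_min ler_Spt. Qed.

Lemma ostatE (y : seq 'I_m) (j : nat) (d : 'I_m) :
  (j < size y)%N -> ostat Smin Smax y j = Spt (nth d y j).
Proof. by case: y => [|a y] //= j_lt; rewrite (set_nth_default d). Qed.

Lemma Omega_q_sortE (n : nat) (x t : n.-tuple 'I_m) (i : 'I_n) :
  Omega_q Smin Smax x i (sortS t) =
  (count (fun k : 'I_m => (k < tnth x i)%N) t <= i)%N.
Proof.
have size_sortS : size (sortS t) = n by rewrite size_sort size_tuple.
rewrite /Omega_q (ostatE idx_min) ?size_tuple // (ostatE idx_min) ?size_sortS //.
rewrite -tnth_nth ler_Spt sorted_leq_nth_count ?size_sortS //; last first.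
  by apply: sort_sorted => a b; apply: leq_total.
by rewrite (permP (permEl (perm_sort _ _))).
Qed.

Definition mass_below (c : 'I_m) (F : 'rV[R]_m) : R := \sum_(k : 'I_m | (k < c)%N) F 0 k.

Lemma mass_not_below (c : 'I_m) (F : 'rV[R]_m) : simplex F ->
  \sum_(k : 'I_m | ~~ (k < c)%N) F 0 k = 1 - mass_below c F.
Proof.
move=> [_ <-]; rewrite [X in _ = X - _](bigID (fun k : 'I_m => (k < c)%N)) /=.
by rewrite [X in _ = X - _]addrC addrK.
Qed.

Lemma mass_below_ge0 (c : 'I_m) (F : 'rV[R]_m) : simplex F -> 0 <= mass_below c F.
Proof. by move=> [F_ge0 _]; apply: sumr_ge0. Qed.

Lemma mass_below_le1 (c : 'I_m) (F : 'rV[R]_m) : simplex F -> mass_below c F <= 1.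
Proof.
move=> simF; rewrite -subr_ge0 -mass_not_below //.
by case: simF => F_ge0 _; apply: sumr_ge0.
Qed.

Lemma Prob_Omega_q (n : nat) (x : n.-tuple 'I_m) (i : 'I_n) (F : 'rV[R]_m) :
  simplex F ->
  Prob n F (Omega_q Smin Smax x i) = binomial_cdf n i (mass_below (tnth x i) F).
Proof.
move=> simF; rewrite /Prob.
under eq_bigl do rewrite Omega_q_sortE.
by rewrite (@sum_tuple_count _ _ _ (F 0) _ (fun k => k <= i)%N) mass_not_below.
Qed.

Lemma mean_ge_mass_below (c : 'I_m) (F : 'rV[R]_m) : simplex F ->
  mass_below c F * Smin + (1 - mass_below c F) * Spt c <= mean F.
Proof.
move=> simF; rewrite -mass_not_below // /mass_below !mulr_suml /mean.
rewrite [leRHS](bigID (fun k : 'I_m => (k < c)%N)) /=.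
case: simF => F_ge0 _; apply: lerD; apply: ler_sum => k k_c; apply: ler_wpM2l => //.
  exact: Smin_le_Spt.
by rewrite ler_Spt leqNgt.
Qed.

Lemma mean_continuous : continuous (mean : 'rV[R]_m -> R).
Proof.
rewrite /mean; apply: (continuous_big add_continuous) => k _ F.
exact: (continuousM (@coord_continuous _ _ _ 0 k F) (@cst_continuous _ _ (Spt k) F)).
Qed.

End SupportPoints.

Section TwoPoint.
Variables (R : realType) (m : nat).

Definition two_point (a b : 'I_m) (q : R) : 'rV[R]_m :=
  q *: delta_mx 0 a + (1 - q) *: delta_mx 0 b.

Lemma sum_two_point (a b : 'I_m) (q : R) (P : pred 'I_m) (f : 'I_m -> R) :
  \sum_(k | P k) two_point a b q 0 k * f k =
  (P a)%:R * (q * f a) + (P b)%:R * ((1 - q) * f b).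
Proof.
rewrite -(@sum_delta_mul _ _ P a (fun k => q * f k)).
rewrite -(@sum_delta_mul _ _ P b (fun k => (1 - q) * f k)) -big_split /=.
apply: eq_bigr => k _.
by rewrite !mxE /= !mulrA [_ * q]mulrC [_ * (1 - q)]mulrC mulrDl.
Qed.

Lemma simplex_two_point (a b : 'I_m) (q : R) :
  0 <= q <= 1 -> simplex (two_point a b q).
Proof.
move=> /andP [q_ge0 q_le1]; split => [k|].
  by rewrite !mxE addr_ge0 ?mulr_ge0 ?subr_ge0.
have := sum_two_point a b q predT (fun=> 1).
by under eq_bigr do rewrite mulr1; rewrite !mulr1 !mul1r addrC subrK.
Qed.

Lemma mean_two_point (Smin Smax : R) (a b : 'I_m) (q : R) :
  mean Smin Smax (two_point a b q) =
  q * Spt Smin Smax a + (1 - q) * Spt Smin Smax b.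
Proof. by rewrite /mean sum_two_point !mul1r. Qed.

Lemma mass_below_two_point (a b c : 'I_m) (q : R) :
  mass_below c (two_point a b q) = (a < c)%N%:R * q + (b < c)%N%:R * (1 - q).
Proof.
have := sum_two_point a b q (fun k : 'I_m => (k < c)%N) (fun=> 1).
by under eq_bigr do rewrite mulr1; rewrite !mulr1.
Qed.

Lemma FC_two_point (C : {set 'I_m}) (a b : 'I_m) (q : R) :
  a \in C -> b \in C -> 0 <= q <= 1 -> FC C (two_point a b q).
Proof.
move=> Ca Cb q01; split => [|k kC]; first exact: simplex_two_point.
have /negbTE ka : k != a by apply: contraNneq kC => ->.
have /negbTE kb : k != b by apply: contraNneq kC => ->.
by rewrite !mxE /= ka kb !mulr0 addr0.
Qed.

Lemma two_point_continuous (a b : 'I_m) : continuous (two_point a b).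
Proof.
move=> q; apply: cvgD; apply: cvgZr_tmp; first exact: cvg_id.
by apply: cvgB; [exact: cvg_cst | exact: cvg_id].
Qed.

End TwoPoint.

Section QuantileMinimum.
Local Open Scope classical_set_scope.
Variables (R : realType) (m n : nat) (Smin Smax : R).
Hypotheses (hm : (2 <= m)%N) (hS : Smin < Smax).
Variables (x : n.-tuple 'I_m) (i : 'I_n) (alpha : R).
Hypothesis alpha_lt1 : alpha < 1.

Local Notation c := (tnth x i).
Local Notation Om := (Omega_q Smin Smax x i).
Local Notation T := (@two_point R m (idx_min hm) c).

Definition critical_mass : R := sup [set mass_below c F | F in Gset n Om alpha].

Lemma Prob_two_point_mass_below (F : 'rV[R]_m) : simplex F ->
  Prob n (T (mass_below c F)) Om = Prob n F Om.
Proof.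
move=> simF; have F01 : 0 <= mass_below c F <= 1.
  by rewrite mass_below_ge0 ?mass_below_le1.
rewrite !Prob_Omega_q //; last exact: simplex_two_point.
rewrite (mass_below_two_point (idx_min hm) c c) ltnn mul0r addr0 /=.
case: (posnP c) => [c0 | _]; last by rewrite mul1r.
by rewrite mul0r /mass_below big_pred0 // => k; rewrite c0.
Qed.

Lemma Gset_two_point0 : Gset n Om alpha (T 0).
Proof.
have T0_simplex : simplex (T 0) by apply: simplex_two_point; rewrite lexx ler01.
split => //; rewrite Prob_Omega_q // (mass_below_two_point (idx_min hm) c c).
by rewrite mulr0 ltnn mul0r addr0 binomial_cdf0.
Qed.

Lemma has_sup_mass_below : has_sup [set mass_below c F | F in Gset n Om alpha].
Proof.
split; first by exists (mass_below c (T 0)); exists (T 0) => //; exact: Gset_two_point0.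
by exists 1 => _ [F [simF _] <-]; exact: mass_below_le1.
Qed.

Lemma mean_Gset_ge (F : 'rV[R]_m) : Gset n Om alpha F ->
  mean Smin Smax (T critical_mass) <= mean Smin Smax F.
Proof.
move=> [simF PF]; rewrite mean_two_point Spt_min.
have le_mass : mass_below c F <= critical_mass.
  by apply: sup_upper_bound has_sup_mass_below _ _; exists F.
(* the two-point bound decreases with the mass since Smin <= S_c *)
have := mean_ge_mass_below hm hS c simF; have := Smin_le_Spt hm hS c; nra.
Qed.

Lemma two_point_mass_below_GCset (F : 'rV[R]_m) : Gset n Om alpha F ->
  GCset n (Cplus [set c]) Om alpha (T (mass_below c F)).
Proof.
move=> [simF PF]; have F01 : 0 <= mass_below c F <= 1.
  by rewrite mass_below_ge0 ?mass_below_le1.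
split; first by apply: FC_two_point; rewrite // !inE ?eqxx ?orbT.
by split; [exact: simplex_two_point | rewrite Prob_two_point_mass_below].
Qed.

Lemma closure_GCset_two_point :
  closure (GCset n (Cplus [set c]) Om alpha) (T critical_mass).
Proof.
have sub : T @` [set mass_below c F | F in Gset n Om alpha] `<=`
           GCset n (Cplus [set c]) Om alpha.
  by move=> _ [_ [F GF <-] <-]; exact: two_point_mass_below_GCset.
apply: (closureS sub); apply: image_closure_continuous; first exact: two_point_continuous.
have [ne ub] := has_sup_mass_below.
by exists critical_mass => //; exact: closure_sup.
Qed.

End QuantileMinimum.

Theorem theorem5 (R : realType) (m n : nat) (Smin Smax : R)
  (hm : (2 <= m)%N) (hn : (1 <= n)%N) (hS : Smin < Smax)
  (x : n.-tuple 'I_m) (hx : sorted (fun a b : 'I_m => (a <= b)%N) x)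
  (alpha : R) (ha0 : 0 <= alpha) (ha1 : alpha < 1) (i : 'I_n) :
  let C := [set tnth x i] in
  let Om := Omega_q Smin Smax x i in
  exists v : R,
    is_min_mean Smin Smax (Fset n Om alpha) v /\
    is_min_mean Smin Smax (FCset n (Cplus C) Om alpha) v.
Proof.
move=> C Om.
set F0 := two_point (idx_min hm) (tnth x i) (critical_mass Smin Smax x i alpha).
have F0_cl : FCset n (Cplus C) Om alpha F0 := closure_GCset_two_point hS ha1.
have GC_sub : (GCset n (Cplus C) Om alpha `<=` Gset n Om alpha)%classic.
  by move=> F [].
have F0_min : forall F, Fset n Om alpha F -> mean Smin Smax F0 <= mean Smin Smax F.
  apply: closure_ge_continuous; first exact: mean_continuous.
  exact: (mean_Gset_ge hm hS ha1).
exists (mean Smin Smax F0); split; split.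
- by exists F0; split => //; exact: (closureS GC_sub).
- exact: F0_min.
- by exists F0.
- by move=> F /(closureS GC_sub); exact: F0_min.
Qed.
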